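(* Let $\beta\in(1,2)$, let $\tau>0$, $n\ge 1$ an integer, and $t_k=k\tau$ for $k=0,1,\dots,n$. Suppose $v\in C^{2}[0,t_n]\cap C^{3}(0,t_n]$ with $|v'''|\in L^1(0,t_n]$, and write $v^k=v(t_k)$. Define $$b_0^{(\beta)}=\frac{1}{\Gamma(3-\beta)},\qquad b_m^{(\beta)}=\frac{1}{\Gamma(3-\beta)}\big[(m+1)^{2-\beta}-m^{2-\beta}\big],\quad m\ge 1,$$ and $$\Delta_t^{\beta}v^n=\frac{1}{\tau^{\beta}}\Big[\sum_{k=2}^{n} b_{n-k}^{(\beta)}\big(v^k-2v^{k-1}+v^{k-2}\big)+2b_{n-1}^{(\beta)}\big(v^1-v^0\big)\Big].$$ Then $${}_0^CD_t^{\beta}v(t_n)=\Delta_t^{\beta}v^n-\frac{2\,b_{n-1}^{(\beta)}}{\tau^{\beta-1}}\,v'(t_0)+R_2[v(t_n)],$$ where the remainder satisfies $$\big|R_2[v(t_n)]\big|\le \frac{9\,t_n^{2-\beta}}{\Gamma(3-\beta)}\,\max_{0\le k\le n-1}\int_0^1\big|v'''(t_k+\theta\tau)\big|\,d\theta\cdot\tau .$$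
   Context: For $\beta\in(1,2)$ and a function $v$ on $[0,T]$ with $v''$ integrable, the Caputo fractional derivative of order $\beta$ is ${}_0^CD_t^{\beta}v(t)=\frac{1}{\Gamma(2-\beta)}\int_0^t (t-s)^{1-\beta}v''(s)\,ds$. $\Gamma$ denotes the Gamma function. An empty sum (when $n=1$) is zero. *)

From Stdlib Require Import Reals.
From Coquelicot Require Import Coquelicot.
Open Scope R_scope.

Definition Gamma (x : R) : R :=
  RInt_gen (fun s => Rpower s (x - 1) * exp (- s)) (at_right 0) (Rbar_locally p_infty).

Definition caputo_integrand (beta : R) (v2 : R -> R) (t : R) (s : R) : R :=
  Rpower (t - s) (1 - beta) * v2 s.

(* Caputo derivative of order beta in (1,2) at t, given v2 = v'':
   1/Gamma(2-beta) * int_0^t (t-s)^(1-beta) v''(s) ds (improper at s = t). *)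
Definition caputo (beta : R) (v2 : R -> R) (t : R) : R :=
  / Gamma (2 - beta) *
  RInt_gen (caputo_integrand beta v2 t) (at_right 0) (at_left t).

Definition bcoef (beta : R) (m : nat) : R :=
  match m with
  | O => / Gamma (3 - beta)
  | S _ => / Gamma (3 - beta) *
           (Rpower (INR m + 1) (2 - beta) - Rpower (INR m) (2 - beta))
  end.

Definition Delta_op (beta tau : R) (v : R -> R) (n : nat) : R :=
  let vk := fun k : nat => v (INR k * tau) in
  / Rpower tau beta *
  (sum_n_m (fun k => bcoef beta (n - k) * (vk k - 2 * vk (k - 1)%nat + vk (k - 2)%nat)) 2 n
   + 2 * bcoef beta (n - 1) * (vk 1%nat - vk 0%nat)).

Fixpoint maxk (f : nat -> R) (m : nat) : R :=
  match m with
  | O => f O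
  | S p => Rmax (maxk f p) (f (S p))
  end.

(* int_0^1 |v3(t_k + theta tau)| d theta  (improper at theta = 0, needed for k = 0) *)
Definition Ik (tau : R) (v3 : R -> R) (k : nat) : R :=
  RInt_gen (fun th => Rabs (v3 (INR k * tau + th * tau))) (at_right 0) (at_point 1).

From Stdlib Require Import Reals Lra Lia.
From Coquelicot Require Import Coquelicot.
Open Scope R_scope.

(* Substituting [rho = (t_n - s) ^ (2 - beta)] and using [Gamma (2 - beta) = Gamma (3 - beta) / (2 - beta)]
   turns the Caputo derivative into [Gamma (3 - beta)^-1] times the integral of
   [v'' (t_n - rho ^ (1 / (2 - beta)))] over [[0, t_n ^ (2 - beta)]].  The grid cell [[t_(k-1), t_k]]
   becomes the rho-cell [[rho_k, rho_(k-1)]] with [rho_k = (t_n - t_k) ^ (2 - beta)], and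
   [Gamma (3 - beta) b_(n-k) tau ^ (2 - beta) = rho_(k-1) - rho_k], so the scheme is the same integral
   with [v''] frozen on each cell to a difference quotient [a_k].  By the mean value theorem [a_k] is a
   value of [v''] on [[t_(k-2), t_k]] (on [[0, tau]] for [k = 1], where [v' 0] enters), so
   [|v'' - a_k| <= 2 tau max_j int_0^1 |v''' (t_j + theta tau)| dtheta] on the cell; the rho-cells add
   up to [t_n ^ (2 - beta)], which gives the estimate with constant 2 instead of 9. *)

Lemma filterlim_at_right_continuous (f g : R -> R) (a : R) :
  (forall x, a < x -> f x = g x) -> continuous g a ->
  filterlim f (at_right a) (locally (g a)).
Proof.
intros Hfg Hg. apply filterlim_ext_loc with g.
- exists (mkposreal 1 Rlt_0_1). intros x _ Hx. symmetry. now apply Hfg.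
- eapply filterlim_filter_le_1; [apply filter_le_within | exact Hg].
Qed.

Lemma filterlim_affine_at_right (t u : R) :
  0 < u -> filterlim (fun x => t + x * u) (at_right 0) (at_right t).
Proof.
intros Hu P [e HP]. exists (mkposreal (e / u) (Rdiv_lt_0_compat _ _ (cond_pos e) Hu)).
intros x Hx Hx0. change (Rabs (x - 0) < e / u) in Hx.
rewrite Rminus_0_r, Rabs_pos_eq in Hx by lra.
apply HP; [| nra]. change (Rabs (t + x * u - t) < e).
rewrite Rabs_pos_eq by nra. apply (Rmult_lt_compat_r u) in Hx; [|lra].
unfold Rdiv in Hx. rewrite Rmult_assoc, Rinv_l, Rmult_1_r in Hx by lra. lra.
Qed.

Lemma continuous_on_eps (D : R -> Prop) (f : R -> R) (x : R) (eps : posreal) :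
  continuous_on D f -> D x ->
  exists d : posreal, forall y, D y -> Rabs (y - x) < d -> Rabs (f y - f x) < eps.
Proof.
intros Hf Dx. destruct (Hf x Dx (ball (f x) eps) (locally_ball _ _)) as [d Hd].
exists d. intros y Dy Hy. exact (Hd y Hy Dy).
Qed.

Lemma continuous_on_plus_continuous (D : R -> Prop) (f g : R -> R) :
  continuous_on D f -> (forall x, continuous g x) -> continuous_on D (fun x => f x + g x).
Proof.
intros Hf Hg x Dx.
apply (filterlim_comp_2 (H := locally (g x)) f g Rplus (Hf x Dx)).
- eapply filterlim_filter_le_1; [apply filter_le_within | apply Hg].
- apply (filterlim_plus (f x) (g x)).
Qed.

Lemma nondecreasing_cvg_p_infty (f : R -> R) (c B : R) :
  (forall x y, c <= x <= y -> f x <= f y) -> (forall x, c <= x -> f x <= B) ->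
  exists l, filterlim f (Rbar_locally p_infty) (locally l) /\ forall x, c <= x -> f x <= l.
Proof.
intros Hmon HB.
destruct (completeness (fun y => exists x, c <= x /\ y = f x)) as [l [Hub Hlub]].
{ exists B. intros y [x [Hx ->]]. now apply HB. }
{ exists (f c), c. split; [lra | reflexivity]. }
assert (Hle : forall x, c <= x -> f x <= l) by (intros x Hx; apply Hub; now exists x).
exists l. split; [| exact Hle].
apply filterlim_locally. intros eps.
assert (exists x0, c <= x0 /\ l - eps < f x0) as [x0 [Hx0 Hlx]].
{ apply Classical_Prop.NNPP. intros Hn.
  enough (l <= l - eps) by (pose proof (cond_pos eps); lra).
  apply Hlub. intros y [x [Hx ->]]. apply Rnot_lt_le. intros Hl. apply Hn. now exists x. }
exists x0. intros x Hx. change (Rabs (f x - l) < eps).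
pose proof (Hle x ltac:(lra)). pose proof (Hmon x0 x ltac:(lra)).
rewrite Rabs_left1; lra.
Qed.

Lemma is_RInt_gen_at_right_point_lim (f : R -> R) (a b l : R) :
  is_RInt_gen f (at_right a) (at_point b) l ->
  at_right a (fun x => ex_RInt f x b) /\
  filterlim (fun x => RInt f x b) (at_right a) (locally l).
Proof.
intros H. split.
- destruct (H (fun _ => True) filter_true) as [Q R HQ HR HQR].
  apply filter_imp with (2 := HQ). intros x Qx.
  destruct (HQR x b Qx HR) as [y [Hy _]]. now exists y.
- intros P HP. destruct (H P HP) as [Q R HQ HR HQR].
  apply filter_imp with (2 := HQ). intros x Qx.
  destruct (HQR x b Qx HR) as [y [Hy Py]]. simpl in Hy.
  now rewrite (is_RInt_unique _ _ _ _ Hy).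
Qed.

Lemma lim_is_RInt_gen_at_right_point (f : R -> R) (a b l : R) : a < b ->
  (forall x, a < x <= b -> ex_RInt f x b) ->
  filterlim (fun x => RInt f x b) (at_right a) (locally l) ->
  is_RInt_gen f (at_right a) (at_point b) l.
Proof.
intros Hab Hex Hlim P HP.
apply Filter_prod with (fun x => a < x <= b /\ P (RInt f x b)) (fun y => y = b).
- apply filter_and; [| now apply Hlim].
  exists (mkposreal (b - a) ltac:(lra)). intros y Hy Hay.
  change (Rabs (y - a) < b - a) in Hy. apply Rabs_lt_between in Hy. lra.
- reflexivity.
- intros x y [Hx HPx] ->. exists (RInt f x b). split; [apply (RInt_correct f)|]; auto.
Qed.

Lemma lim_is_RInt_gen_point_p_infty (f : R -> R) (a l : R) :
  (forall y, a <= y -> ex_RInt f a y) ->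
  filterlim (fun y => RInt f a y) (Rbar_locally p_infty) (locally l) ->
  is_RInt_gen f (at_point a) (Rbar_locally p_infty) l.
Proof.
intros Hex Hlim P HP.
apply Filter_prod with (fun x => x = a) (fun y => a <= y /\ P (RInt f a y)).
- reflexivity.
- apply filter_and; [exists a; intros; lra | now apply Hlim].
- intros x y -> [Hy HPy]. exists (RInt f a y). split; [apply (RInt_correct f)|]; auto.
Qed.

Lemma is_RInt_affine (f : R -> R) (t u a b l : R) : 0 < u ->
  is_RInt f (t + a * u) (t + b * u) l ->
  is_RInt (fun y => f (t + y * u)) a b (l / u).
Proof.
intros Hu H.
replace (t + a * u) with (u * a + t) in H by ring.
replace (t + b * u) with (u * b + t) in H by ring.
apply is_RInt_comp_lin, (is_RInt_scal _ _ _ (/ u)) in H.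
replace (l / u) with (scal (/ u) l) by (unfold scal; simpl; unfold mult; simpl; field; lra).
eapply is_RInt_ext; [| exact H]. intros x _.
unfold scal; simpl; unfold mult; simpl. replace (u * x + t) with (t + x * u) by ring. field. lra.
Qed.

Lemma sum_n_m_le_loc (a b : nat -> R) (m n : nat) :
  (forall k, (m <= k <= n)%nat -> a k <= b k) -> sum_n_m a m n <= sum_n_m b m n.
Proof.
intros H. rewrite (sum_n_m_ext_loc a (fun k => Rmin (a k) (b k))).
- apply sum_n_m_le. intros k. apply Rmin_r.
- intros k Hk. now rewrite Rmin_left by (apply H; lia).
Qed.

Lemma sum_n_m_telescope (r : nat -> R) (n : nat) :
  sum_n_m (fun k => r (k - 1)%nat - r k) 1 n = r 0%nat - r n.
Proof.
induction n as [|n IH].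
- rewrite sum_n_m_zero by lia. simpl. unfold zero; simpl. ring.
- rewrite sum_n_Sm, IH by lia. replace (S n - 1)%nat with n by lia.
  unfold plus; simpl. ring.
Qed.

Lemma sum_n_m_Rmult_l (c : R) (a : nat -> R) (m n : nat) :
  sum_n_m (fun k => c * a k) m n = c * sum_n_m a m n.
Proof. exact (sum_n_m_mult_l (K := R_Ring) c a m n). Qed.

Lemma sum_n_m_Rminus (a b : nat -> R) (m n : nat) :
  sum_n_m (fun k => a k - b k) m n = sum_n_m a m n - sum_n_m b m n.
Proof.
rewrite (sum_n_m_ext _ (fun k => plus (a k) (-1 * b k))) by (intros; unfold plus; simpl; ring).
rewrite sum_n_m_plus, sum_n_m_Rmult_l. unfold plus; simpl. ring.
Qed.

Lemma maxk_ge (f : nat -> R) (m j : nat) : (j <= m)%nat -> f j <= maxk f m.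
Proof.
induction m as [|m IH]; intros Hj.
- replace j with 0%nat by lia. simpl. lra.
- simpl. destruct (Nat.eq_dec j (S m)) as [-> | Hne].
  + apply Rmax_r.
  + eapply Rle_trans; [apply IH; lia | apply Rmax_l].
Qed.

Definition clamp (lo hi x : R) : R := Rmax lo (Rmin hi x).

Lemma clamp_in (lo hi x : R) : lo <= hi -> lo <= clamp lo hi x <= hi.
Proof.
intros H. unfold clamp. split; [apply Rmax_l |].
apply Rmax_lub; [lra | apply Rmin_l].
Qed.

Lemma clamp_id (lo hi x : R) : lo <= x <= hi -> clamp lo hi x = x.
Proof. intros H. unfold clamp. now rewrite Rmin_right, Rmax_right by lra. Qed.

Lemma clamp_lipschitz (lo hi x y : R) :
  Rabs (clamp lo hi y - clamp lo hi x) <= Rabs (y - x).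
Proof.
unfold clamp, Rmax, Rmin.
repeat destruct Rle_dec; unfold Rabs; repeat destruct Rcase_abs; lra.
Qed.

Lemma continuous_clamp (f : R -> R) (lo hi x : R) : lo <= hi ->
  continuous_on (fun y => lo <= y <= hi) f -> continuous (fun y => f (clamp lo hi y)) x.
Proof.
intros Hlh Hf. eapply filterlim_comp; [| apply Hf, clamp_in, Hlh].
intros P [e HP]. exists e. intros y Hy. apply HP; [| now apply clamp_in].
eapply Rle_lt_trans; [apply clamp_lipschitz | exact Hy].
Qed.

Lemma MVT_closed (f df : R -> R) (lo hi a b : R) :
  lo <= a <= b -> b <= hi ->
  continuous_on (fun x => lo <= x <= hi) f ->
  (forall x, lo < x < hi -> is_derive f x (df x)) ->
  exists c, a <= c <= b /\ f b - f a = df c * (b - a).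
Proof.
intros Hab Hb Hf Hdf.
destruct (MVT_gen (fun y => f (clamp lo hi y)) a b df) as [c [Hc Heq]].
- intros x Hx. rewrite Rmin_left, Rmax_right in Hx by lra.
  apply is_derive_ext_loc with f; [| apply Hdf; lra].
  exists (mkposreal (Rmin (x - lo) (hi - x)) ltac:(apply Rmin_glb_lt; lra)).
  intros y Hy. change (Rabs (y - x) < Rmin (x - lo) (hi - x)) in Hy.
  pose proof (Rmin_l (x - lo) (hi - x)). pose proof (Rmin_r (x - lo) (hi - x)).
  apply Rabs_lt_between in Hy. rewrite clamp_id; lra.
- intros x _. apply continuity_pt_filterlim, continuous_clamp; [lra | exact Hf].
- rewrite Rmin_left, Rmax_right in Hc by lra. rewrite !clamp_id in Heq by lra.
  now exists c.
Qed.

Lemma increment_le_closed (f g : R -> R) (lo hi : R) :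
  continuous_on (fun x => lo <= x <= hi) f ->
  (forall a b, lo <= a -> a <= b -> b <= hi -> g a <= g b) ->
  (forall a b, lo < a -> a <= b -> b < hi -> Rabs (f b - f a) <= g b - g a) ->
  forall a b, lo <= a -> a <= b -> b <= hi -> Rabs (f b - f a) <= g b - g a.
Proof.
intros Hf Hg Hint a b Ha Hab Hb.
destruct (Req_dec a b) as [<- | Hne]; [rewrite !Rminus_diag, Rabs_R0; lra |].
apply Rle_plus_epsilon. intros eps Heps.
destruct (continuous_on_eps _ f a (mkposreal (eps / 2) ltac:(lra)) Hf ltac:(lra)) as [da Hda].
destruct (continuous_on_eps _ f b (mkposreal (eps / 2) ltac:(lra)) Hf ltac:(lra)) as [db Hdb].
simpl in Hda, Hdb. pose proof (cond_pos da). pose proof (cond_pos db).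
set (h := Rmin (Rmin da db) (b - a) / 3).
assert (0 < Rmin (Rmin da db) (b - a)) by (repeat apply Rmin_glb_lt; lra).
assert (Hh : 0 < h) by (unfold h; lra).
assert (h <= da / 3 /\ h <= db / 3 /\ h <= (b - a) / 3) as [Hha [Hhb Hhab]].
{ unfold h. pose proof (Rmin_l (Rmin da db) (b - a)). pose proof (Rmin_r (Rmin da db) (b - a)).
  pose proof (Rmin_l da db). pose proof (Rmin_r da db). lra. }
pose proof (Hint (a + h) (b - h) ltac:(lra) ltac:(lra) ltac:(lra)).
pose proof (Hg a (a + h) ltac:(lra) ltac:(lra) ltac:(lra)).
pose proof (Hg (b - h) b ltac:(lra) ltac:(lra) ltac:(lra)).
pose proof (Hda (a + h) ltac:(lra) ltac:(rewrite Rabs_pos_eq; lra)).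
pose proof (Hdb (b - h) ltac:(lra) ltac:(rewrite Rabs_left; lra)).
pose proof (Rabs_triang (f b - f (b - h)) (f (b - h) - f (a + h))).
pose proof (Rabs_triang (f b - f (b - h) + (f (b - h) - f (a + h))) (f (a + h) - f a)).
rewrite (Rabs_minus_sym (f b) (f (b - h))) in *.
replace (f b - f (b - h) + (f (b - h) - f (a + h)) + (f (a + h) - f a)) with (f b - f a) in * by ring.
lra.
Qed.

(* The standard library has [Rpower 0 q = 1]; [Rpower0 x q] is instead the continuous
   extension of [x ^ q] (for [q > 0]) by [0] on [x <= 0]. *)
Definition Rpower0 (x q : R) : R := if Rlt_dec 0 x then Rpower x q else 0.

Lemma Rpower0_pos (x q : R) : 0 < x -> Rpower0 x q = Rpower x q.
Proof. intros Hx. unfold Rpower0. now destruct Rlt_dec. Qed.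

Lemma Rpower0_nonpos (x q : R) : x <= 0 -> Rpower0 x q = 0.
Proof. intros Hx. unfold Rpower0. destruct Rlt_dec; lra. Qed.

Lemma Rpower_pos (x q : R) : 0 < Rpower x q.
Proof. apply exp_pos. Qed.

Lemma Rpower0_nonneg (x q : R) : 0 <= Rpower0 x q.
Proof. unfold Rpower0. destruct Rlt_dec; [apply Rlt_le, Rpower_pos | lra]. Qed.

Lemma Rpower0_le (x y q : R) : 0 < q -> x <= y -> Rpower0 x q <= Rpower0 y q.
Proof.
intros Hq Hxy. unfold Rpower0.
destruct (Rlt_dec 0 x), (Rlt_dec 0 y); try lra.
- apply Rle_Rpower_l; lra.
- apply Rlt_le, Rpower_pos.
Qed.

Lemma Rpower0_inv (x q : R) : 0 < q -> 0 <= x -> Rpower0 (Rpower0 x q) (/ q) = x.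
Proof.
intros Hq Hx. destruct (Rlt_dec 0 x) as [Hx0 | Hx0].
- rewrite (Rpower0_pos x), Rpower0_pos by (auto using Rpower_pos).
  rewrite Rpower_mult, Rinv_r, Rpower_1 by lra. reflexivity.
- rewrite (Rpower0_nonpos x), Rpower0_nonpos; lra.
Qed.

Lemma Rpower_lim_0 (q eps : R) : 0 < q -> 0 < eps ->
  exists d : posreal, forall s, 0 < s < d -> Rpower s q < eps.
Proof.
intros Hq He. assert (Hd : 0 < Rmin 1 (exp (ln eps / q))).
{ apply Rmin_glb_lt; [lra | apply exp_pos]. }
exists (mkposreal _ Hd). simpl. intros s Hs.
assert (Hs' : s < exp (ln eps / q)) by (eapply Rlt_le_trans; [apply Hs | apply Rmin_r]).
unfold Rpower. rewrite <- (exp_ln eps) by lra. apply exp_increasing.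
apply ln_increasing in Hs'; [| lra]. rewrite ln_exp in Hs'.
apply (Rmult_lt_compat_l q) in Hs'; [| lra]. field_simplify in Hs'; lra.
Qed.

Lemma Rpower0_continuous (q x : R) : 0 < q -> continuous (fun y => Rpower0 y q) x.
Proof.
intros Hq. destruct (Rlt_dec 0 x) as [Hx | Hx].
- apply continuous_ext_loc with (fun y => Rpower y q).
  + exists (mkposreal x Hx). intros y Hy. change (Rabs (y - x) < x) in Hy.
    apply Rabs_lt_between in Hy. rewrite Rpower0_pos by lra. reflexivity.
  + unfold Rpower. apply (ex_derive_continuous (V := R_NormedModule)). auto_derive. lra.
- apply filterlim_locally. intros eps.
  destruct (Rpower_lim_0 q eps Hq (cond_pos eps)) as [d Hd].
  exists d. intros y Hy. change (Rabs (y - x) < d) in Hy. change (Rabs (Rpower0 y q - Rpower0 x q) < eps).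
  rewrite (Rpower0_nonpos x) by lra.
  rewrite Rminus_0_r, Rabs_pos_eq by apply Rpower0_nonneg.
  destruct (Rlt_dec 0 y) as [Hy0 | Hy0].
  + rewrite Rpower0_pos by lra. apply Hd. apply Rabs_lt_between in Hy. lra.
  + rewrite Rpower0_nonpos by lra. apply cond_pos.
Qed.

(** * The Gamma function *)

Definition Gamma_kernel (q s : R) : R := Rpower s q * exp (- s).

Lemma Gamma_kernel_continuous (q s : R) : 0 < s -> continuous (Gamma_kernel q) s.
Proof.
intros Hs. unfold Gamma_kernel, Rpower.
apply (ex_derive_continuous (V := R_NormedModule)). auto_derive. lra.
Qed.

Lemma Gamma_kernel_nonneg (q s : R) : 0 <= Gamma_kernel q s.
Proof.
unfold Gamma_kernel. apply Rmult_le_pos; apply Rlt_le; [apply Rpower_pos | apply exp_pos].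
Qed.

Lemma ex_RInt_Gamma_kernel (q a b : R) : 0 < a -> a <= b -> ex_RInt (Gamma_kernel q) a b.
Proof.
intros Ha Hab. apply (ex_RInt_continuous (V := R_CompleteNormedModule)). intros z Hz.
rewrite Rmin_left in Hz by lra. apply Gamma_kernel_continuous. lra.
Qed.

Lemma RInt_Gamma_kernel_le (q a b c : R) : 0 < a -> a <= b <= c ->
  RInt (Gamma_kernel q) a b <= RInt (Gamma_kernel q) a c.
Proof.
intros Ha Hbc. rewrite <- (RInt_Chasles (Gamma_kernel q) a b c) by (apply ex_RInt_Gamma_kernel; lra).
enough (0 <= RInt (Gamma_kernel q) b c) by (unfold plus; simpl; lra).
apply RInt_ge_0; [lra | apply ex_RInt_Gamma_kernel; lra | intros; apply Gamma_kernel_nonneg].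
Qed.

Lemma Gamma_kernel_integral_0_1 (q : R) : 0 < q ->
  exists l, is_RInt_gen (Gamma_kernel q) (at_right 0) (at_point 1) l /\ 0 < l.
Proof.
intros Hq. set (g := fun s => Rpower0 s q * exp (- s)).
assert (Hg : forall s, continuous g s).
{ intros s. apply (continuous_mult (K := R_AbsRing) (fun s => Rpower0 s q) (fun s => exp (- s))).
  - now apply Rpower0_continuous.
  - apply (ex_derive_continuous (V := R_NormedModule)). auto_derive. easy. }
assert (Hgex : forall a b, ex_RInt g a b).
{ intros a b. apply (ex_RInt_continuous (V := R_CompleteNormedModule)). intros; apply Hg. }
exists (RInt g 0 1). split.
- apply lim_is_RInt_gen_at_right_point; [lra | intros; apply ex_RInt_Gamma_kernel; lra |].
  apply filterlim_at_right_continuous with (g := fun x => RInt g x 1).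
  + intros x Hx. apply RInt_ext. intros s Hs.
    assert (0 < Rmin x 1) by (apply Rmin_glb_lt; lra).
    unfold g, Gamma_kernel. rewrite Rpower0_pos by lra. reflexivity.
  + apply (continuous_RInt_2 g 0 1). apply filter_forall. intros z. apply (RInt_correct g), Hgex.
- apply RInt_gt_0; [lra | | intros; apply Hg]. intros s Hs. unfold g.
  rewrite Rpower0_pos by lra. apply Rmult_lt_0_compat; [apply Rpower_pos | apply exp_pos].
Qed.

Lemma Gamma_kernel_integral_1_p_infty (q : R) : q <= 1 ->
  exists l, is_RInt_gen (Gamma_kernel q) (at_point 1) (Rbar_locally p_infty) l /\ 0 <= l.
Proof.
intros Hq.
set (F := fun t => - ((t + 1) * exp (- t))).
assert (HF : forall y, 1 <= y -> is_RInt (fun t => t * exp (- t)) 1 y (F y - F 1)).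
{ intros y Hy. apply (is_RInt_derive F).
  - intros x _. unfold F. auto_derive; auto. ring.
  - intros x _. apply (ex_derive_continuous (V := R_NormedModule)). auto_derive. auto. }
destruct (nondecreasing_cvg_p_infty (fun y => RInt (Gamma_kernel q) 1 y) 1 1) as [l [Hl Hle]].
- intros x y Hxy. apply RInt_Gamma_kernel_le; lra.
- intros y Hy. eapply Rle_trans.
  + apply RInt_le with (g := fun t => t * exp (- t)); [lra | apply ex_RInt_Gamma_kernel; lra | |].
    * eexists. now apply HF.
    * intros x Hx. unfold Gamma_kernel. apply Rmult_le_compat_r; [apply Rlt_le, exp_pos |].
      rewrite <- (Rpower_1 x) at 2 by lra. apply Rle_Rpower; lra.
  + rewrite (is_RInt_unique _ _ _ _ (HF y Hy)). unfold F.
    assert (0 < (y + 1) * exp (- y)) by (pose proof (exp_pos (- y)); nra).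
    assert (exp (- (1)) <= / 2).
    { rewrite exp_Ropp. apply Rinv_le_contravar; [lra |]. pose proof (exp_ineq1_le 1). lra. }
    lra.
- exists l. split.
  + apply lim_is_RInt_gen_point_p_infty; [intros; apply ex_RInt_Gamma_kernel; lra | exact Hl].
  + assert (E : RInt (Gamma_kernel q) 1 1 = 0) by apply (RInt_point 1 (Gamma_kernel q)).
    rewrite <- E. apply Hle. lra.
Qed.

Lemma Gamma_succ (q : R) : 0 < q <= 1 ->
  is_RInt_gen (Gamma_kernel q) (at_right 0) (Rbar_locally p_infty) (Gamma (q + 1)) /\
  0 < Gamma (q + 1).
Proof.
intros Hq.
destruct (Gamma_kernel_integral_0_1 q ltac:(lra)) as [l0 [H0 Hl0]].
destruct (Gamma_kernel_integral_1_p_infty q ltac:(lra)) as [l1 [H1 Hl1]].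
assert (H := is_RInt_gen_Chasles _ _ _ _ H0 H1).
assert (E : Gamma (q + 1) = plus l0 l1).
{ unfold Gamma. replace (q + 1 - 1) with q by ring. now apply is_RInt_gen_unique. }
rewrite E. split; [exact H | unfold plus; simpl; lra].
Qed.

Lemma Rmult_exp_neg_le (x : R) : 0 < x -> x * exp (- x) <= 4 / x.
Proof.
intros Hx. pose proof (exp_pos x) as Hex.
assert (Hsq : x * x <= 4 * exp x).
{ replace x with (x / 2 + x / 2) at 3 by field. rewrite exp_plus.
  pose proof (exp_ineq1_le (x / 2)). nra. }
rewrite exp_Ropp.
replace (x * / exp x) with (x * x * / (x * exp x)) by (field; lra).
replace (4 / x) with (4 * exp x * / (x * exp x)) by (field; lra).
apply Rmult_le_compat_r; [apply Rlt_le, Rinv_0_lt_compat; nra | exact Hsq].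
Qed.

Lemma Gamma_kernel_lim_0 (q : R) : 0 < q ->
  filterlim (Gamma_kernel q) (at_right 0) (locally 0).
Proof.
intros Hq.
assert (H := filterlim_at_right_continuous (Gamma_kernel q) (fun s => Rpower0 s q * exp (- s)) 0).
cbv beta in H. rewrite Rpower0_nonpos, Rmult_0_l in H by lra. apply H.
- intros x Hx. unfold Gamma_kernel. now rewrite Rpower0_pos.
- apply (continuous_mult (K := R_AbsRing) (fun s => Rpower0 s q) (fun s => exp (- s))).
  + now apply Rpower0_continuous.
  + apply (ex_derive_continuous (V := R_NormedModule)). auto_derive. easy.
Qed.

Lemma Gamma_kernel_lim_p_infty (q : R) : q <= 1 ->
  filterlim (Gamma_kernel q) (Rbar_locally p_infty) (locally 0).
Proof.
intros Hq.
assert (Hinv : filterlim (fun x => 4 * / x) (Rbar_locally p_infty) (locally 0)).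
{ replace 0 with (4 * 0) by ring.
  apply (is_lim_scal_l (fun x => / x) 4 p_infty 0).
  apply (is_lim_inv (fun x => x) p_infty p_infty); [apply is_lim_id | easy]. }
apply (filterlim_le_le (fun _ => 0) (Gamma_kernel q) (fun x => 4 * / x) 0).
- exists 1. intros x Hx. split; [apply Gamma_kernel_nonneg |].
  eapply Rle_trans; [| apply (Rmult_exp_neg_le x); lra]. unfold Gamma_kernel.
  apply Rmult_le_compat_r; [apply Rlt_le, exp_pos |].
  rewrite <- (Rpower_1 x) at 2 by lra. apply Rle_Rpower; lra.
- apply filterlim_const.
- exact Hinv.
Qed.

(* Integration by parts against [-(s ^ q e ^ -s)]. *)
Lemma Gamma_pred (q : R) : 0 < q <= 1 -> Gamma q = Gamma (q + 1) / q.
Proof.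
intros Hq. destruct (Gamma_succ q Hq) as [Hsucc _].
set (FF := fun s => - Gamma_kernel q s).
assert (HFF : forall s, 0 < s ->
  is_derive FF s (Gamma_kernel q s - q * Gamma_kernel (q - 1) s)).
{ intros s Hs. unfold FF, Gamma_kernel, Rpower. auto_derive; [lra |].
  replace ((q - 1) * ln s) with (q * ln s + - ln s) by ring.
  rewrite exp_plus, (exp_Ropp (ln s)), exp_ln by lra. field. lra. }
assert (Hpos : filter_prod (at_right 0) (Rbar_locally p_infty)
  (fun ab : R * R => 0 < Rmin (fst ab) (snd ab))).
{ apply Filter_prod with (fun a => 0 < a) (fun b => 0 < b).
  - exists (mkposreal 1 Rlt_0_1). intros; auto.
  - exists 0. auto.
  - intros a b Ha Hb. simpl. now apply Rmin_glb_lt. }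
assert (Hopp : filterlim Ropp (locally 0) (locally 0)).
{ rewrite <- Ropp_0 at 2. apply (filterlim_opp 0). }
assert (HD : is_RInt_gen (Derive FF) (at_right 0) (Rbar_locally p_infty) (0 - 0)).
{ apply is_RInt_gen_Derive.
  - apply filter_imp with (2 := Hpos). intros [a b] Hab x Hx. simpl in *.
    eexists. apply HFF. lra.
  - apply filter_imp with (2 := Hpos). intros [a b] Hab x Hx. simpl in *.
    apply continuous_ext_loc with (fun s => Gamma_kernel q s - q * Gamma_kernel (q - 1) s).
    + exists (mkposreal x ltac:(lra)). intros y Hy. change (Rabs (y - x) < x) in Hy.
      apply Rabs_lt_between in Hy. symmetry. apply is_derive_unique, HFF. lra.
    + unfold Gamma_kernel, Rpower. apply (ex_derive_continuous (V := R_NormedModule)).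
      auto_derive. lra.
  - apply (filterlim_comp _ _ _ (Gamma_kernel q) Ropp _ (locally 0)); [| exact Hopp].
    apply Gamma_kernel_lim_0; lra.
  - apply (filterlim_comp _ _ _ (Gamma_kernel q) Ropp _ (locally 0)); [| exact Hopp].
    apply Gamma_kernel_lim_p_infty; lra. }
assert (H := is_RInt_gen_scal _ (/ q) _ (is_RInt_gen_minus _ _ _ _ Hsucc HD)).
unfold Gamma at 1. apply is_RInt_gen_unique.
replace (Gamma (q + 1) / q) with (scal (/ q) (minus (Gamma (q + 1)) (0 - 0)))
  by (unfold scal, minus, plus, opp; simpl; unfold mult; simpl; field; lra).
eapply is_RInt_gen_ext; [| exact H].
apply filter_imp with (2 := Hpos). intros [a b] Hab x Hx. simpl in *.
rewrite (is_derive_unique _ _ _ (HFF x ltac:(lra))).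
unfold scal, minus, plus, opp; simpl. unfold mult; simpl. unfold Gamma_kernel. field. lra.
Qed.

(** * The Caputo integral in the variable [(t_n - s) ^ (2 - beta)] *)

(* [v2] read in the variable [rho = (T - s) ^ q], i.e. [s = T - rho ^ (1/q)]. *)
Definition caputo_reparam (T q : R) (v2 : R -> R) (rho : R) : R :=
  v2 (clamp 0 T (T - Rpower0 rho (/ q))).

Section CaputoReparam.

Variables (beta T : R) (v2 : R -> R).
Hypotheses (Hbeta : 1 < beta < 2) (HT : 0 < T)
  (Hv2 : continuous_on (fun x => 0 <= x <= T) v2).

Local Notation q := (2 - beta).
Local Notation h := (caputo_reparam T (2 - beta) v2).

Lemma caputo_reparam_continuous (rho : R) : continuous h rho.
Proof.
unfold caputo_reparam.
apply (continuous_comp (fun rho => T - Rpower0 rho (/ q)) (fun s => v2 (clamp 0 T s))).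
- apply (continuous_minus (V := R_NormedModule) (fun _ => T) (fun rho => Rpower0 rho (/ q))).
  + apply continuous_const.
  + apply Rpower0_continuous, Rinv_0_lt_compat. lra.
- apply continuous_clamp; [lra | exact Hv2].
Qed.

Lemma ex_RInt_caputo_reparam (a b : R) : ex_RInt h a b.
Proof.
apply (ex_RInt_continuous (V := R_CompleteNormedModule)). intros; apply caputo_reparam_continuous.
Qed.

Lemma caputo_reparam_at (s : R) : 0 <= s <= T -> h (Rpower0 (T - s) q) = v2 s.
Proof.
intros Hs. unfold caputo_reparam. rewrite Rpower0_inv, clamp_id by lra. f_equal. ring.
Qed.

(* The primitive [G] of the Caputo integrand is continuous on the whole line, so the
   improper integral is just [G T - G 0]. *)
Lemma is_RInt_gen_caputo_integrand :
  is_RInt_gen (caputo_integrand beta v2 T) (at_right 0) (at_left T)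
    (/ q * RInt h 0 (Rpower0 T q)).
Proof.
set (F := fun w => RInt h 0 w).
assert (HF : forall w, is_derive F w (h w)).
{ intros w. apply (is_derive_RInt h F 0 w); [| apply caputo_reparam_continuous].
  apply filter_forall. intros z. apply (RInt_correct h), ex_RInt_caputo_reparam. }
set (G := fun s => - / q * F (Rpower0 (T - s) q)).
assert (HG : forall s, 0 < s < T -> is_derive G s (caputo_integrand beta v2 T s)).
{ intros s Hs.
  assert (Hp : is_derive (fun s => Rpower0 (T - s) q) s (- q * Rpower (T - s) (q - 1))).
  { apply is_derive_ext_loc with (fun s => Rpower (T - s) q).
    - apply (locally_interval _ s 0 T); simpl; try lra. intros y _ Hy. simpl in Hy.
      rewrite Rpower0_pos by lra. reflexivity.
    - unfold Rpower. auto_derive; [lra |].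
      replace ((q - 1) * ln (T - s)) with (q * ln (T - s) + - ln (T - s)) by ring.
      rewrite exp_plus, (exp_Ropp (ln (T - s))), exp_ln by lra.
      replace (T + - s) with (T - s) by ring. field. lra. }
  assert (H := is_derive_scal _ _ (- / q) _ (is_derive_comp F _ s _ _ (HF _) Hp)).
  replace (caputo_integrand beta v2 T s)
    with (- / q * scal (- q * Rpower (T - s) (q - 1)) (h (Rpower0 (T - s) q))).
  + exact H.
  + unfold scal; simpl; unfold mult; simpl. rewrite caputo_reparam_at by lra.
    unfold caputo_integrand. replace (1 - beta) with (q - 1) by ring. field. lra. }
assert (HGc : forall s, continuous G s).
{ intros s. apply (continuous_scal_r (K := R_AbsRing) (- / q) (fun s => F (Rpower0 (T - s) q))).
  apply (continuous_comp (fun s => Rpower0 (T - s) q) F).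
  - apply (continuous_comp (fun s => T - s) (fun x => Rpower0 x q)); [| apply Rpower0_continuous; lra].
    apply (ex_derive_continuous (V := R_NormedModule)). auto_derive. easy.
  - apply (ex_derive_continuous (V := R_NormedModule)). eexists. apply HF. }
assert (Hin : filter_prod (at_right 0) (at_left T)
  (fun ab : R * R => forall x, Rmin (fst ab) (snd ab) <= x <= Rmax (fst ab) (snd ab) -> 0 < x < T)).
{ apply Filter_prod with (fun a => 0 < a < T) (fun b => 0 < b < T).
  - exists (mkposreal T HT). intros y Hy Hy0. change (Rabs (y - 0) < T) in Hy.
    apply Rabs_lt_between in Hy. lra.
  - exists (mkposreal T HT). intros y Hy Hy0. change (Rabs (y - T) < T) in Hy.
    apply Rabs_lt_between in Hy. lra.
  - intros a b Ha Hb x Hx. simpl in Hx.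
    pose proof (Rmin_glb_lt a b 0). pose proof (Rmax_lub_lt a b T). lra. }
assert (HD : is_RInt_gen (Derive G) (at_right 0) (at_left T) (G T - G 0)).
{ apply is_RInt_gen_Derive.
  - apply filter_imp with (2 := Hin). intros ab Hab x Hx. eexists. apply HG, Hab, Hx.
  - apply filter_imp with (2 := Hin). intros ab Hab x Hx. specialize (Hab x Hx).
    apply continuous_ext_loc with (caputo_integrand beta v2 T).
    + apply (locally_interval _ x 0 T); simpl; try lra. intros y Hy1 Hy2.
      symmetry. apply is_derive_unique, HG. simpl in *; lra.
    + apply (continuous_mult (K := R_AbsRing) (fun s => Rpower (T - s) (1 - beta)) v2).
      * unfold Rpower. apply (ex_derive_continuous (V := R_NormedModule)). auto_derive. lra.
      * apply continuous_continuous_on with (fun x => 0 <= x <= T); [| exact Hv2].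
        apply (locally_interval _ x 0 T); simpl; try lra. intros y Hy1 Hy2. simpl in *; lra.
  - eapply filterlim_filter_le_1; [apply filter_le_within | apply HGc].
  - eapply filterlim_filter_le_1; [apply filter_le_within | apply HGc]. }
replace (/ q * F (Rpower0 T q)) with (G T - G 0).
- eapply is_RInt_gen_ext; [| exact HD].
  apply filter_imp with (2 := Hin). intros ab Hab x Hx.
  apply is_derive_unique, HG, Hab. lra.
- unfold G, F. rewrite Rminus_diag, Rminus_0_r, Rpower0_nonpos by lra.
  rewrite (RInt_point 0 h). unfold zero; simpl. ring.
Qed.

Lemma caputo_eq_RInt_reparam :
  caputo beta v2 T = / Gamma (3 - beta) * RInt h 0 (Rpower0 T q).
Proof.
destruct (Gamma_succ q ltac:(lra)) as [_ HG].
replace (q + 1) with (3 - beta) in HG by ring.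
unfold caputo. rewrite (is_RInt_gen_unique _ _ is_RInt_gen_caputo_integrand), Gamma_pred by lra.
replace (q + 1) with (3 - beta) by ring. field. lra.
Qed.

End CaputoReparam.

(** * The primitive of [|v'''|] *)

Section AbsPrimitive.

Variables (T L : R) (v2 v3 : R -> R).
Hypotheses (Hv2 : continuous_on (fun x => 0 <= x <= T) v2)
  (Hv3 : continuous_on (fun x => 0 < x <= T) v3)
  (Hd2 : forall x, 0 < x < T -> is_derive v2 x (v3 x))
  (HL : is_RInt_gen (fun s => Rabs (v3 s)) (at_right 0) (at_point T) L).

Local Notation A := (fun s => Rabs (v3 s)).

(* [x |-> int_0^x |v3|], written through the improper integral [L = int_0^T |v3|]. *)
Definition abs_primitive (x : R) : R := if Rlt_dec 0 x then L - RInt A x T else 0.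

Local Notation Phi := abs_primitive.

Lemma ex_RInt_abs_v3 (a b : R) : 0 < a -> a <= b -> b <= T -> ex_RInt A a b.
Proof.
intros Ha Hab Hb. apply (ex_RInt_Chasles_1 A a b T); [lra |].
destruct (is_RInt_gen_at_right_point_lim _ _ _ _ HL) as [[d Hd] _].
set (x := Rmin a (d / 2)). pose proof (cond_pos d).
assert (0 < x) by (apply Rmin_glb_lt; lra).
assert (x <= a) by apply Rmin_l. assert (x <= d / 2) by apply Rmin_r.
apply (ex_RInt_Chasles_2 A x a T); [lra |]. apply Hd; [| lra].
change (Rabs (x - 0) < d). rewrite Rminus_0_r, Rabs_pos_eq; lra.
Qed.

Lemma abs_primitive_sub (a b : R) : 0 < a -> a <= b -> b <= T -> Phi b - Phi a = RInt A a b.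
Proof.
intros Ha Hab Hb. unfold abs_primitive.
destruct (Rlt_dec 0 a); [| lra]. destruct (Rlt_dec 0 b); [| lra].
rewrite <- (RInt_Chasles A a b T) by (apply ex_RInt_abs_v3; lra).
unfold plus; simpl. ring.
Qed.

Lemma RInt_abs_v3_ge0 (a b : R) : 0 < a -> a <= b -> b <= T -> 0 <= RInt A a b.
Proof.
intros Ha Hab Hb. apply RInt_ge_0; [lra | apply ex_RInt_abs_v3; lra | intros; apply Rabs_pos].
Qed.

Lemma abs_primitive_le (a b : R) : 0 <= a -> a <= b -> b <= T -> Phi a <= Phi b.
Proof.
intros Ha Hab Hb. destruct (Rlt_dec 0 a) as [Ha0 | Ha0].
- pose proof (abs_primitive_sub a b Ha0 Hab Hb).
  pose proof (RInt_abs_v3_ge0 a b Ha0 Hab Hb). lra.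
- unfold abs_primitive. destruct (Rlt_dec 0 a); [lra |]. destruct (Rlt_dec 0 b); [| lra].
  enough (Rbar_le (RInt A b T) L) by (simpl in *; lra).
  destruct (is_RInt_gen_at_right_point_lim _ _ _ _ HL) as [_ Hlim].
  apply (filterlim_le (F := at_right 0) (fun _ => RInt A b T) (fun x => RInt A x T));
    [| apply filterlim_const | exact Hlim].
  exists (mkposreal b ltac:(lra)). intros x Hx Hx0. change (Rabs (x - 0) < b) in Hx.
  rewrite Rminus_0_r, Rabs_pos_eq in Hx by lra.
  rewrite <- (RInt_Chasles A x b T) by (apply ex_RInt_abs_v3; lra).
  pose proof (RInt_abs_v3_ge0 x b Hx0 ltac:(lra) ltac:(lra)). unfold plus; simpl. lra.
Qed.

Lemma abs_primitive_right_continuous (a : R) : 0 <= a < T ->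
  filterlim Phi (at_right a) (locally (Phi a)).
Proof.
intros Ha. assert (HPhi : forall x, 0 < x -> Phi x = L - RInt A x T).
{ intros x Hx. unfold abs_primitive. now destruct Rlt_dec. }
destruct (Rlt_dec 0 a) as [Ha0 | Ha0].
- rewrite HPhi by lra.
  apply (filterlim_at_right_continuous _ (fun x => L - RInt A x T)); [intros; apply HPhi; lra |].
  apply (continuous_minus (V := R_NormedModule) (fun _ => L) (fun x => RInt A x T));
    [apply continuous_const |].
  apply (continuous_RInt_2 A a T).
  apply (locally_interval _ a 0 T); simpl; try lra. intros z Hz1 Hz2. simpl in *.
  apply (RInt_correct A), ex_RInt_abs_v3; lra.
- replace a with 0 by lra. replace (Phi 0) with (L - L)
    by (unfold abs_primitive; destruct Rlt_dec; lra).
  apply filterlim_ext_loc with (fun x => L - RInt A x T).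
  + exists (mkposreal 1 Rlt_0_1). intros x _ Hx. symmetry. now apply HPhi.
  + destruct (is_RInt_gen_at_right_point_lim _ _ _ _ HL) as [_ Hlim].
    apply (filterlim_comp _ _ _ (fun x => RInt A x T) (fun z => L - z) _ (locally L) _ Hlim).
    apply (continuous_minus (V := R_NormedModule) (fun _ => L) (fun z => z));
      [apply continuous_const | apply continuous_id].
Qed.

Lemma abs_sub_v2_le (a b : R) : 0 <= a -> a <= b -> b <= T ->
  Rabs (v2 b - v2 a) <= Phi b - Phi a.
Proof.
revert a b. apply increment_le_closed; [exact Hv2 | apply abs_primitive_le |].
intros a b Ha Hab Hb. rewrite abs_primitive_sub by lra.
assert (Hi : is_RInt v3 a b (v2 b - v2 a)).
{ apply (is_RInt_derive v2 v3 a b); intros x Hx; rewrite Rmin_left, Rmax_right in Hx by lra.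
  - apply Hd2. lra.
  - apply continuous_continuous_on with (fun x => 0 < x <= T); [| exact Hv3].
    apply (locally_interval _ x 0 T); simpl; try lra. intros y Hy1 Hy2. simpl in *; lra. }
rewrite <- (is_RInt_unique _ _ _ _ Hi). apply abs_RInt_le; [exact Hab | eexists; exact Hi].
Qed.

Lemma abs_sub_v2_le_interval (lo hi x y : R) : 0 <= lo -> hi <= T ->
  lo <= x <= hi -> lo <= y <= hi -> Rabs (v2 x - v2 y) <= Phi hi - Phi lo.
Proof.
intros Hlo Hhi Hx Hy.
assert (H : forall a b, lo <= a <= b -> b <= hi -> Rabs (v2 b - v2 a) <= Phi hi - Phi lo).
{ intros a b Hab Hb. eapply Rle_trans; [apply abs_sub_v2_le; lra |].
  pose proof (abs_primitive_le lo a ltac:(lra) ltac:(lra) ltac:(lra)).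
  pose proof (abs_primitive_le b hi ltac:(lra) ltac:(lra) ltac:(lra)). lra. }
destruct (Rle_dec y x); [apply H; lra |]. rewrite Rabs_minus_sym. apply H; lra.
Qed.

End AbsPrimitive.

(** * Difference quotients *)

Section MeanValueQuotients.

Variables (T tau : R) (v v1 v2 : R -> R).
Hypotheses (Htau : 0 < tau)
  (Hv : continuous_on (fun x => 0 <= x <= T) v)
  (Hv1 : continuous_on (fun x => 0 <= x <= T) v1)
  (Hd : forall x, 0 < x < T -> is_derive v x (v1 x))
  (Hd1 : forall x, 0 < x < T -> is_derive v1 x (v2 x)).

Lemma second_difference_mean_value (a : R) : 0 <= a -> a + 2 * tau <= T ->
  exists xi, a <= xi <= a + 2 * tau /\
    v (a + 2 * tau) - 2 * v (a + tau) + v a = tau ^ 2 * v2 xi.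
Proof.
intros Ha HaT.
set (g := fun x => v (x + tau) - v x).
assert (Hg : continuous_on (fun x => 0 <= x <= T - tau) g).
{ apply continuous_on_ext with (fun x => v (clamp 0 T (x + tau)) - v (clamp 0 T x)).
  - intros x Hx. unfold g. rewrite !clamp_id by lra. reflexivity.
  - apply continuous_on_forall. intros x _.
    apply (continuous_minus (V := R_NormedModule) (fun x => v (clamp 0 T (x + tau)))).
    + apply (continuous_comp (fun x => x + tau) (fun y => v (clamp 0 T y))).
      * apply (ex_derive_continuous (V := R_NormedModule)). auto_derive. easy.
      * apply continuous_clamp; [lra | exact Hv].
    + apply continuous_clamp; [lra | exact Hv]. }
assert (Hdg : forall x, 0 < x < T - tau -> is_derive g x (v1 (x + tau) - v1 x)).
{ intros x Hx. apply (is_derive_minus (fun x => v (x + tau)) v); [| apply Hd; lra].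
  assert (H := is_derive_comp v (fun y => y + tau) x _ 1 (Hd (x + tau) ltac:(lra))
    ltac:(auto_derive; [easy | ring])).
  rewrite <- (Rmult_1_l (v1 (x + tau))). exact H. }
destruct (MVT_closed g _ 0 (T - tau) a (a + tau) ltac:(lra) ltac:(lra) Hg Hdg) as [c [Hc Hgc]].
destruct (MVT_closed v1 v2 0 T c (c + tau) ltac:(lra) ltac:(lra) Hv1 Hd1) as [xi [Hxi Hv1c]].
exists xi. split; [lra |]. unfold g in Hgc.
replace (a + tau + tau) with (a + 2 * tau) in Hgc by ring.
replace (c + tau - c) with tau in Hv1c by ring. rewrite Hv1c in Hgc.
replace (a + tau - a) with tau in Hgc by ring. lra.
Qed.

(* Comparing with an arbitrary level [c] avoids a second-order (Cauchy) mean value theorem. *)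
Lemma first_quotient_mean_value (c : R) : tau <= T ->
  exists xi, 0 <= xi <= tau /\
    Rabs (2 * (v tau - v 0 - tau * v1 0) / tau ^ 2 - c) <= 2 * Rabs (v2 xi - c).
Proof.
intros HtT.
set (m := fun x => v x + (- x * v1 0 - c * x ^ 2 / 2)).
assert (Hm : continuous_on (fun x => 0 <= x <= T) m).
{ apply continuous_on_plus_continuous; [exact Hv |]. intros x.
  apply (ex_derive_continuous (V := R_NormedModule)). auto_derive. easy. }
assert (Hdm : forall x, 0 < x < T -> is_derive m x (v1 x + (- v1 0 - c * x))).
{ intros x Hx. apply (is_derive_plus v); [apply Hd; lra |]. auto_derive; [easy | field]. }
destruct (MVT_closed m _ 0 T 0 tau ltac:(lra) HtT Hm Hdm) as [x1 [Hx1 Hmx1]].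
set (p := fun x => v1 x + - c * x).
assert (Hp : continuous_on (fun x => 0 <= x <= T) p).
{ apply continuous_on_plus_continuous; [exact Hv1 |]. intros x.
  apply (ex_derive_continuous (V := R_NormedModule)). auto_derive. easy. }
assert (Hdp : forall x, 0 < x < T -> is_derive p x (v2 x + - c)).
{ intros x Hx. apply (is_derive_plus v1); [apply Hd1; lra |]. auto_derive; [easy | ring]. }
destruct (MVT_closed p _ 0 T 0 x1 ltac:(lra) ltac:(lra) Hp Hdp) as [xi [Hxi Hpxi]].
exists xi. split; [lra |]. unfold m, p in *.
replace (2 * (v tau - v 0 - tau * v1 0) / tau ^ 2 - c) with (2 * x1 / tau * (v2 xi - c)).
- rewrite Rabs_mult, (Rabs_pos_eq (2 * x1 / tau)) by (apply Rdiv_le_0_compat; lra).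
  apply Rmult_le_compat_r; [apply Rabs_pos |].
  apply (Rmult_le_reg_r tau); [lra |]. unfold Rdiv. rewrite Rmult_assoc, Rinv_l by lra. lra.
- replace (v tau - v 0 - tau * v1 0) with (c * tau ^ 2 / 2 + (v2 xi - c) * x1 * tau) by nra.
  field. lra.
Qed.

End MeanValueQuotients.

(** * The scheme *)

(* The quotient [a_k] approximating [v''] on [t_(k-1), t_k]; for [k = 1] it carries
   the initial slope [v1 0] of the scheme. *)
Definition grid_quotient (tau : R) (v v1 : R -> R) (k : nat) : R :=
  match k with
  | 1%nat => 2 * (v tau - v 0 - tau * v1 0) / tau ^ 2
  | _ => (v (INR k * tau) - 2 * v (INR (k - 1) * tau) + v (INR (k - 2) * tau)) / tau ^ 2
  end.

Lemma bcoef_Rpower (beta tau : R) (n k : nat) : 0 < tau -> (1 <= k <= n)%nat ->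
  bcoef beta (n - k) * Rpower tau (2 - beta) =
  / Gamma (3 - beta) * (Rpower0 (INR n * tau - INR (k - 1) * tau) (2 - beta)
                        - Rpower0 (INR n * tau - INR k * tau) (2 - beta)).
Proof.
intros Htau Hk.
replace (INR n * tau - INR (k - 1) * tau) with ((INR (n - k) + 1) * tau)
  by (rewrite !minus_INR by lia; simpl; ring).
replace (INR n * tau - INR k * tau) with (INR (n - k) * tau) by (rewrite minus_INR by lia; ring).
destruct (n - k)%nat as [|m].
- simpl. rewrite (Rpower0_nonpos (0 * tau)), Rpower0_pos by lra.
  replace ((0 + 1) * tau) with tau by ring. ring.
- pose proof (lt_0_INR (S m) ltac:(lia)).
  unfold bcoef. rewrite !Rpower0_pos, <- !Rpower_mult_distr by nra. ring.
Qed.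

Lemma Delta_op_weighted_sum (beta tau : R) (n : nat) (v v1 : R -> R) :
  0 < tau -> (1 <= n)%nat ->
  Delta_op beta tau v n - 2 * bcoef beta (n - 1) / Rpower tau (beta - 1) * v1 0 =
  / Gamma (3 - beta) * sum_n_m (fun k => grid_quotient tau v v1 k *
      (Rpower0 (INR n * tau - INR (k - 1) * tau) (2 - beta)
       - Rpower0 (INR n * tau - INR k * tau) (2 - beta))) 1 n.
Proof.
intros Htau Hn.
set (P := Rpower tau beta). assert (HP : 0 < P) by apply Rpower_pos.
assert (E2 : Rpower tau (2 - beta) = tau ^ 2 / P).
{ unfold P, Rminus. rewrite Rpower_plus, Rpower_Ropp.
  replace 2 with (INR 2) at 1 by (simpl; ring). rewrite Rpower_pow by lra. reflexivity. }
assert (E1 : Rpower tau (beta - 1) = P / tau).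
{ unfold P, Rminus. rewrite Rpower_plus, Rpower_Ropp, Rpower_1 by lra. reflexivity. }
rewrite <- sum_n_m_Rmult_l.
rewrite (sum_n_m_ext_loc _ (fun k => grid_quotient tau v v1 k * (bcoef beta (n - k) * (tau ^ 2 / P)))).
2:{ intros k Hk. rewrite <- E2, bcoef_Rpower by (lra || lia).
    match goal with |- @eq _ ?x ?y => change (@eq R x y) end. ring. }
rewrite sum_Sn_m by lia.
rewrite (sum_n_m_ext_loc _ (fun k => / P * (bcoef beta (n - k) *
    (v (INR k * tau) - 2 * v (INR (k - 1) * tau) + v (INR (k - 2) * tau))))).
- rewrite sum_n_m_Rmult_l. unfold Delta_op, plus; simpl.
  rewrite E1. fold P. replace (1 * tau) with tau by ring. replace (0 * tau) with 0 by ring.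
  field. lra.
- intros k Hk. destruct k as [|[|k]]; [lia | lia |]. unfold grid_quotient.
  match goal with |- @eq _ ?x ?y => change (@eq R x y) end. field. lra.
Qed.

Section Scheme.

Variables (beta tau : R) (n : nat) (v v1 v2 v3 : R -> R) (L : R).

Local Notation T := (INR n * tau).
Local Notation q := (2 - beta).
Local Notation Phi := (abs_primitive T L v3).
Local Notation r k := (Rpower0 (INR n * tau - INR k * tau) (2 - beta)).

Hypotheses (Hbeta : 1 < beta < 2) (Htau : 0 < tau) (Hn : (1 <= n)%nat)
  (Hv : continuous_on (fun x => 0 <= x <= T) v)
  (Hv1 : continuous_on (fun x => 0 <= x <= T) v1)
  (Hv2 : continuous_on (fun x => 0 <= x <= T) v2)
  (Hv3 : continuous_on (fun x => 0 < x <= T) v3)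
  (Hd : forall x, 0 < x < T -> is_derive v x (v1 x))
  (Hd1 : forall x, 0 < x < T -> is_derive v1 x (v2 x))
  (Hd2 : forall x, 0 < x < T -> is_derive v2 x (v3 x))
  (HL : is_RInt_gen (fun s => Rabs (v3 s)) (at_right 0) (at_point T) L).

Lemma T_pos : 0 < T.
Proof. pose proof (le_INR 1 n Hn). simpl in *. nra. Qed.

Lemma grid_le_T (k : nat) : (k <= n)%nat -> 0 <= INR k * tau <= T.
Proof.
intros Hk. pose proof (pos_INR k). pose proof (le_INR k n Hk). split; nra.
Qed.

Lemma Ik_abs_primitive (j : nat) : (j < n)%nat ->
  Ik tau v3 j = (Phi (INR (S j) * tau) - Phi (INR j * tau)) / tau.
Proof.
intros Hj. destruct (grid_le_T j ltac:(lia)) as [Htj _].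
destruct (grid_le_T (S j) ltac:(lia)) as [_ Htj1].
rewrite S_INR in *. set (t := INR j * tau) in *.
replace ((INR j + 1) * tau) with (t + 1 * tau) in * by (unfold t; ring).
assert (Hsub : forall x, 0 < x <= 1 ->
  is_RInt (fun th => Rabs (v3 (t + th * tau))) x 1 ((Phi (t + 1 * tau) - Phi (t + x * tau)) / tau)).
{ intros x Hx.
  apply (is_RInt_affine (fun s => Rabs (v3 s)) t tau x 1 _ Htau).
  assert (0 < x * tau) by (apply Rmult_lt_0_compat; lra).
  assert (x * tau <= 1 * tau) by (apply Rmult_le_compat_r; lra).
  rewrite abs_primitive_sub by (exact HL || lra).
  apply (RInt_correct (fun s => Rabs (v3 s))), (ex_RInt_abs_v3 T L v3 HL); lra. }
unfold Ik. apply is_RInt_gen_unique.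
apply lim_is_RInt_gen_at_right_point; [lra | intros x Hx; eexists; now apply Hsub |].
apply filterlim_ext_loc with (fun x => (Phi (t + 1 * tau) - Phi (t + x * tau)) / tau).
- exists (mkposreal 1 Rlt_0_1). intros x Hx Hx0. change (Rabs (x - 0) < 1) in Hx.
  rewrite Rminus_0_r, Rabs_pos_eq in Hx by lra.
  symmetry. apply is_RInt_unique, Hsub. lra.
- apply (filterlim_comp _ _ _ (fun x => Phi (t + x * tau)) (fun z => (Phi (t + 1 * tau) - z) / tau)
    _ (locally (Phi t))).
  + apply (filterlim_comp _ _ _ (fun x => t + x * tau) Phi _ (at_right t)).
    * now apply filterlim_affine_at_right.
    * apply abs_primitive_right_continuous; [exact HL | lra].
  + apply (ex_derive_continuous (V := R_NormedModule) (fun z => (Phi (t + 1 * tau) - z) / tau)).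
    auto_derive. lra.
Qed.

Lemma abs_primitive_increment_le (j : nat) : (j < n)%nat ->
  Phi (INR (S j) * tau) - Phi (INR j * tau) <= tau * maxk (Ik tau v3) (n - 1).
Proof.
intros Hj. pose proof (maxk_ge (Ik tau v3) (n - 1) j ltac:(lia)) as Hmax.
rewrite Ik_abs_primitive in Hmax by exact Hj.
apply (Rmult_le_compat_l tau) in Hmax; [| lra].
replace (tau * ((Phi (INR (S j) * tau) - Phi (INR j * tau)) / tau))
  with (Phi (INR (S j) * tau) - Phi (INR j * tau)) in Hmax by (field; lra).
exact Hmax.
Qed.

Lemma maxk_Ik_nonneg : 0 <= maxk (Ik tau v3) (n - 1).
Proof.
destruct (grid_le_T 1 Hn) as [_ Htau1]. simpl in Htau1. rewrite Rmult_1_l in Htau1.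
pose proof (abs_primitive_le T L v3 HL 0 tau ltac:(lra) ltac:(lra) Htau1).
eapply Rle_trans; [| apply (maxk_ge _ _ 0); lia]. rewrite Ik_abs_primitive by lia.
simpl. rewrite Rmult_0_l, Rmult_1_l. apply Rdiv_le_0_compat; lra.
Qed.

Lemma grid_quotient_approx (delta : R) :
  (forall j, (j < n)%nat -> Phi (INR (S j) * tau) - Phi (INR j * tau) <= delta) ->
  forall k s, (1 <= k <= n)%nat -> INR (k - 1) * tau <= s <= INR k * tau ->
  Rabs (v2 s - grid_quotient tau v v1 k) <= 2 * delta.
Proof.
intros Hdelta k s Hk Hs. destruct (grid_le_T k ltac:(lia)) as [_ HkT].
destruct k as [|[|k]]; [lia | |].
- change (grid_quotient tau v v1 1) with (2 * (v tau - v 0 - tau * v1 0) / tau ^ 2).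
  simpl in Hs, HkT. rewrite Rmult_0_l in Hs. rewrite Rmult_1_l in Hs, HkT.
  destruct (first_quotient_mean_value T tau v v1 v2 Htau Hv Hv1 Hd Hd1 (v2 s) HkT)
    as [xi [Hxi Hxi_le]].
  pose proof (abs_sub_v2_le_interval T L v2 v3 Hv2 Hv3 Hd2 HL 0 tau xi s ltac:(lra) HkT Hxi Hs).
  pose proof (Hdelta 0%nat ltac:(lia)). simpl in H0.
  rewrite Rmult_0_l, Rmult_1_l in H0. rewrite Rabs_minus_sym. lra.
- replace (S (S k) - 1)%nat with (S k) in Hs by lia.
  set (a := INR k * tau).
  assert (Ht1 : INR (S k) * tau = a + tau) by (unfold a; rewrite S_INR; ring).
  assert (Ht2 : INR (S (S k)) * tau = a + 2 * tau) by (unfold a; rewrite !S_INR; ring).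
  destruct (grid_le_T k ltac:(lia)) as [Ha _].
  destruct (second_difference_mean_value T tau v v1 v2 Htau Hv Hv1 Hd Hd1 a Ha ltac:(lra))
    as [xi [Hxi Hxi_eq]].
  unfold grid_quotient. replace (S (S k) - 1)%nat with (S k) by lia.
  replace (S (S k) - 2)%nat with k by lia. fold a. rewrite Ht1, Ht2, Hxi_eq.
  replace (tau ^ 2 * v2 xi / tau ^ 2) with (v2 xi) by (field; lra).
  pose proof (abs_sub_v2_le_interval T L v2 v3 Hv2 Hv3 Hd2 HL a (a + 2 * tau) s xi Ha
    ltac:(lra) ltac:(lra) Hxi).
  pose proof (Hdelta k ltac:(lia)) as Hk0. pose proof (Hdelta (S k) ltac:(lia)) as Hk1.
  rewrite Ht1 in Hk0, Hk1. rewrite Ht2 in Hk1. fold a in Hk0. lra.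
Qed.

Lemma reparam_cell_error_le (delta : R) (k : nat) :
  (forall j, (j < n)%nat -> Phi (INR (S j) * tau) - Phi (INR j * tau) <= delta) ->
  (1 <= k <= n)%nat ->
  Rabs (RInt (caputo_reparam T q v2) (r k) (r (k - 1)%nat)
        - grid_quotient tau v v1 k * (r (k - 1)%nat - r k))
  <= 2 * delta * (r (k - 1)%nat - r k).
Proof.
intros Hdelta Hk. set (h := caputo_reparam T q v2). set (c := grid_quotient tau v v1 k).
pose proof (ex_RInt_caputo_reparam beta T v2 Hbeta T_pos Hv2) as Hex.
destruct (grid_le_T k ltac:(lia)) as [Htk HtkT].
destruct (grid_le_T (k - 1) ltac:(lia)) as [Htk1 _].
assert (Hk1 : INR (k - 1) * tau = INR k * tau - tau) by (rewrite minus_INR by lia; simpl; ring).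
assert (Hr : r k <= r (k - 1)%nat) by (apply Rpower0_le; lra).
assert (E : @eq R (RInt (fun x => h x - c) (r k) (r (k - 1)%nat))
  (RInt h (r k) (r (k - 1)%nat) - c * (r (k - 1)%nat - r k))).
{ rewrite (RInt_minus h (fun _ => c)) by (apply Hex || apply ex_RInt_const).
  rewrite RInt_const. unfold minus, plus, opp, scal; simpl; unfold mult; simpl. ring. }
rewrite <- E, (Rmult_comm (2 * delta)). apply abs_RInt_le_const; [exact Hr | |].
- apply (ex_RInt_minus (V := R_NormedModule) h (fun _ => c));
    [apply Hex | apply ex_RInt_const].
- intros rho Hrho. unfold h, caputo_reparam.
  assert (Hlo : Rpower0 (r k) (/ q) <= Rpower0 rho (/ q))
    by (apply Rpower0_le; [apply Rinv_0_lt_compat; lra | lra]).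
  assert (Hhi : Rpower0 rho (/ q) <= Rpower0 (r (k - 1)%nat) (/ q))
    by (apply Rpower0_le; [apply Rinv_0_lt_compat; lra | lra]).
  rewrite !Rpower0_inv in Hlo, Hhi by lra.
  rewrite clamp_id by lra. apply (grid_quotient_approx delta Hdelta k); [exact Hk | lra].
Qed.

Lemma scheme_error_le (delta : R) :
  (forall j, (j < n)%nat -> Phi (INR (S j) * tau) - Phi (INR j * tau) <= delta) ->
  Rabs (RInt (caputo_reparam T q v2) 0 (Rpower0 T q)
        - sum_n_m (fun k => grid_quotient tau v v1 k * (r (k - 1)%nat - r k)) 1 n)
  <= 2 * delta * Rpower T q.
Proof.
intros Hdelta. pose proof T_pos as HT.
set (h := caputo_reparam T q v2). set (F := fun w => RInt h 0 w).
assert (HF : forall a b, @eq R (RInt h a b) (F b - F a)).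
{ intros a b. unfold F.
  rewrite <- (RInt_Chasles h 0 a b) by apply (ex_RInt_caputo_reparam beta T v2 Hbeta HT Hv2).
  unfold plus; simpl. lra. }
assert (Hrn : r n = 0) by (apply Rpower0_nonpos; lra).
assert (Hr0 : r 0%nat = Rpower T q) by (simpl; rewrite Rpower0_pos; [f_equal |]; lra).
replace (F (Rpower0 T q)) with (F (r 0%nat) - F (r n)).
2:{ rewrite Hrn, Hr0, <- Rpower0_pos by lra. unfold F. rewrite (RInt_point 0 h).
    unfold zero; simpl. ring. }
assert (Htel := sum_n_m_telescope (fun k => F (r k)) n). cbv beta in Htel.
rewrite <- Htel, <- sum_n_m_Rminus.
eapply Rle_trans; [apply (norm_sum_n_m (V := R_NormedModule)) |].
eapply Rle_trans; [apply sum_n_m_le_loc; intros k Hk; rewrite <- HF;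
  apply (reparam_cell_error_le delta k Hdelta Hk) |].
assert (Htelr := sum_n_m_telescope (fun k => r k) n). cbv beta in Htelr.
rewrite sum_n_m_Rmult_l, Htelr, Hrn, Hr0. lra.
Qed.

End Scheme.

Theorem lemma2 (beta tau : R) (n : nat) (v v1 v2 v3 : R -> R) :
  1 < beta < 2 -> 0 < tau -> (1 <= n)%nat ->
  let T := INR n * tau in
  continuous_on (fun x => 0 <= x <= T) v ->
  continuous_on (fun x => 0 <= x <= T) v1 ->
  continuous_on (fun x => 0 <= x <= T) v2 ->
  continuous_on (fun x => 0 < x <= T) v3 ->
  (forall x, 0 < x < T -> is_derive v x (v1 x)) ->
  (forall x, 0 < x < T -> is_derive v1 x (v2 x)) ->
  (forall x, 0 < x < T -> is_derive v2 x (v3 x)) ->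
  ex_RInt_gen (fun s => Rabs (v3 s)) (at_right 0) (at_point T) ->
  ex_RInt_gen (caputo_integrand beta v2 T) (at_right 0) (at_left T) /\
  Rabs (caputo beta v2 T
        - (Delta_op beta tau v n - 2 * bcoef beta (n - 1) / Rpower tau (beta - 1) * v1 0))
  <= 9 * Rpower T (2 - beta) / Gamma (3 - beta) * maxk (Ik tau v3) (n - 1) * tau.
Proof.
intros Hb Ht Hn T Hv Hv1 Hv2 Hv3 Hd Hd1 Hd2 [L HL].
assert (HT : 0 < T) by (unfold T; pose proof (le_INR 1 n Hn); simpl in *; nra).
assert (HG3 : 0 < / Gamma (3 - beta)).
{ apply Rinv_0_lt_compat. replace (3 - beta) with (2 - beta + 1) by ring.
  apply Gamma_succ. lra. }
split; [eexists; exact (is_RInt_gen_caputo_integrand beta T v2 Hb HT Hv2) |].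
rewrite (caputo_eq_RInt_reparam beta T v2 Hb HT Hv2), Delta_op_weighted_sum by (lra || lia).
rewrite <- Rmult_minus_distr_l, Rabs_mult, (Rabs_pos_eq (/ Gamma (3 - beta))) by lra.
set (M := maxk (Ik tau v3) (n - 1)).
assert (HM0 : 0 <= M) by exact (maxk_Ik_nonneg tau n v3 L Ht Hn HL).
pose proof (scheme_error_le beta tau n v v1 v2 v3 L Hb Ht Hn Hv Hv1 Hv2 Hv3 Hd Hd1 Hd2 HL
  (tau * M) (abs_primitive_increment_le tau n v3 L Ht Hn HL)) as Herr.
assert (0 <= tau * M * Rpower T (2 - beta))
  by (apply Rmult_le_pos; [nra | apply Rlt_le, Rpower_pos]).
replace (9 * Rpower T (2 - beta) / Gamma (3 - beta) * M * tau)
  with (/ Gamma (3 - beta) * (9 * (tau * M * Rpower T (2 - beta)))) by (unfold Rdiv; ring).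
apply Rmult_le_compat_l; [lra |]. unfold T in *. lra.
Qed.
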